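(* Let $G$ be a finitely generated amenable group with a fixed finite symmetric generating set $S$. Let $H_i\subseteq G$ be any sequence of finite index subgroups with $I_i=[G:H_i]\to\infty$, and let $C_i=G/H_i$. Then $$\lim_{i\to\infty}\frac{\operatorname{sw}(C_i)}{I_i}=0.$$
   Context: The coset space $C=G/H$ (cosets $gH$) is given the graph structure of the Schreier graph: there is an edge between distinct cosets $x$ and $y$ iff $y=sx$ for some $s\in S$ (where $G$ acts on cosets by left multiplication). For $A\subseteq C$, $\partial A$ denotes the set of vertices of $A$ adjacent to some vertex of the complement of $A$. A sweepout $\mathfrak F$ of the finite graph $C$ is a nested sequence of subsets $\emptyset=F_0\subseteq F_1\subseteq\dots\subseteq F_{|C|}=C$ with $|F_j|=j$; its width is $\operatorname{w}(\mathfrak F)=\max_j|\partial F_j|$. The sweepout width is $\operatorname{sw}(C)=\min_{\mathfrak F}\operatorname{w}(\mathfrak F)$ over all sweepouts. *)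

From mathcomp Require Import all_boot.
From Stdlib Require Import Reals.

Set Implicit Arguments.
Unset Strict Implicit.
Unset Printing Implicit Defensive.

Record is_group (G : Type) (mul : G -> G -> G) (one : G) (inv : G -> G) : Prop := {
  grp_assoc : forall x y z, mul x (mul y z) = mul (mul x y) z;
  grp_mul1 : forall x, mul one x = x;
  grp_mulV : forall x, mul (inv x) x = one
}.

Definition symmetric_gen (G : Type) (inv : G -> G) (S : seq G) : Prop :=
  forall s, List.In s S -> List.In (inv s) S.

(* S generates G (as a monoid; equivalently as a group since S is symmetric) *)
Definition generates (G : Type) (mul : G -> G -> G) (one : G) (S : seq G) : Prop :=
  forall g, exists l : seq G,
    (forall x, List.In x l -> List.In x S) /\ g = foldr mul one l.

(* von Neumann amenability: a left-invariant finitely additive probability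
   measure defined on all subsets of G *)
Definition amenable (G : Type) (mul : G -> G -> G) (inv : G -> G) : Prop :=
  exists m : (G -> Prop) -> R,
    (forall A, (0 <= m A)%R) /\
    m (fun _ => True) = 1%R /\
    (forall A B, (forall x, A x -> B x -> False) ->
       m (fun x => A x \/ B x) = (m A + m B)%R) /\
    (forall g A, m (fun x => A (mul (inv g) x)) = m A).

Record is_subgroup (G : Type) (mul : G -> G -> G) (one : G) (inv : G -> G)
    (H : G -> Prop) : Prop := {
  sub_one : H one;
  sub_mul : forall x y, H x -> H y -> H (mul x y);
  sub_inv : forall x, H x -> H (inv x)
}.

(* (C, pi, act) is the coset space G/H = {gH}: pi g = gH is surjective,
   pi g = pi h iff gH = hH iff g^-1 h in H, and act is the action of G on
   cosets by left multiplication. *)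
Definition is_coset_space (G : Type) (mul : G -> G -> G) (inv : G -> G)
    (H : G -> Prop) (C : finType) (pi : G -> C) (act : G -> C -> C) : Prop :=
  (forall c, exists g, pi g = c) /\
  (forall g h, pi g = pi h <-> H (mul (inv g) h)) /\
  (forall g h, act g (pi h) = pi (mul g h)).

Section Sweep.
Variables (G : Type) (C : finType) (act : G -> C -> C) (S : seq G).

Definition schreier_adj : rel C :=
  fun x y => (x != y) && has (fun s => act s x == y) S.

Definition vboundary (A : {set C}) : {set C} :=
  [set x in A | [exists y, (y \notin A) && schreier_adj x y]].

Definition is_sweepout (F : {ffun 'I_(#|C|).+1 -> {set C}}) : bool :=
  (F ord0 == set0) && (F ord_max == setT) &&
  [forall j : 'I_(#|C|).+1, #|F j| == nat_of_ord j] &&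
  [forall j : 'I_(#|C|).+1, forall k : 'I_(#|C|).+1,
     ((j <= k)%N) ==> (F j \subset F k)].

Definition sweep_width (F : {ffun 'I_(#|C|).+1 -> {set C}}) : nat :=
  \max_(j : 'I_(#|C|).+1) #|vboundary (F j)|.

(* minimum width over all sweepouts (#|C| is an upper bound for any width,
   and sweepouts always exist) *)
Definition sweepout_width : nat :=
  \big[minn/#|C|]_(F : {ffun 'I_(#|C|).+1 -> {set C}} | is_sweepout F)
     sweep_width F.
End Sweep.

(* Amenable groups have Folner sets: otherwise every finite set doubles under a
   bounded number of steps along the generators, and Hall's theorem together
   with compactness produces an injection G x {0,1} -> G moving points a
   bounded distance, whose two halves would both have full invariant mean.
   Given a Folner set F, label each coset c by the min-hash of the multiset
   F^-1 c. For a well chosen hash permutation the label is constant along all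
   but O(|C| |S| / M) edges, where M is the Folner ratio, and each label class
   has at most |F| elements; sweeping the cosets by label gives a sweepout of
   width O(|C| / M + |F|), which is o(|C|) as |C| grows. *)

From mathcomp Require Import all_boot zify fingroup perm.
From mathcomp Require Import boolp.
From Stdlib Require Import Reals Classical ClassicalEpsilon Lra.
Set Implicit Arguments. Unset Strict Implicit. Unset Printing Implicit Defensive.

Section Hall.
Variables (A B : finType) (b0 : B).
Implicit Types (X Y : {set A}) (N : A -> {set B}) (f : A -> B).

Definition hall_cond N X :=
  forall Y, Y \subset X -> #|Y| <= #|\bigcup_(y in Y) N y|.

Definition matching N X f :=
  {in X &, injective f} /\ forall x, x \in X -> f x \in N x.

Lemma hall_condS N X X' : X' \subset X -> hall_cond N X -> hall_cond N X'.
Proof. by move=> sX hX Y sY; apply: hX (subset_trans sY sX). Qed.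

Lemma matchingS N N' X f :
  (forall x, x \in X -> N x \subset N' x) -> matching N X f -> matching N' X f.
Proof. by move=> sN [fI fN]; split=> // x xX; apply: subsetP (sN x xX) _ (fN x xX). Qed.

Lemma matching_set0 N : matching N set0 (fun=> b0).
Proof. by split=> [x y|x]; rewrite inE. Qed.

Lemma matching_glue N X Y f1 f2 : Y \subset X ->
  matching N Y f1 -> matching N (X :\: Y) f2 ->
  (forall x y, x \in Y -> y \in X :\: Y -> f1 x != f2 y) ->
  matching N X (fun x => if x \in Y then f1 x else f2 x).
Proof.
move=> sYX [f1I f1N] [f2I f2N] f12; split=> [x y xX yX|x xX].
  have XYP z : z \in X -> z \notin Y -> z \in X :\: Y by rewrite inE => -> ->.
  case: ifP => xY; case: ifP => yY => exy.
  - exact: f1I.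
  - by move: (f12 x y xY (XYP y yX (negbT yY))); rewrite exy eqxx.
  - by move: (f12 y x yY (XYP x xX (negbT xY))); rewrite exy eqxx.
  - by apply: f2I; rewrite ?XYP ?xY ?yY.
by case: ifP => xY; [apply: f1N | apply: f2N; rewrite inE xY].
Qed.

Lemma bigcup_setDr N (Z : {set A}) (W : {set B}) :
  \bigcup_(z in Z) (N z :\: W) = \bigcup_(z in Z) N z :\: W.
Proof.
apply/setP=> b; rewrite inE; apply/bigcupP/andP.
  by case=> z zZ; rewrite inE => /andP[-> bN]; split=> //; apply/bigcupP; exists z.
by case=> nb /bigcupP[z zZ bN]; exists z; rewrite // inE nb.
Qed.

Lemma hall_cond_tight N X Y : hall_cond N X -> Y \subset X ->
  #|\bigcup_(y in Y) N y| = #|Y| ->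
  hall_cond (fun x => N x :\: \bigcup_(y in Y) N y) (X :\: Y).
Proof.
move=> hX sYX tY Z sZ; set NY := \bigcup_(y in Y) N y; rewrite bigcup_setDr.
have dZY : [disjoint Z & Y].
  by apply/pred0P=> a /=; apply/negbTE/andP=> -[aZ aY]; move: (subsetP sZ a aZ); rewrite inE aY.
have sZY : Z :|: Y \subset X by rewrite subUset sYX (subset_trans sZ) ?subsetDl.
have := hX _ sZY; rewrite bigcup_setU (cardsU Z) (disjoint_setI0 dZY) cards0.
have := subset_leq_card (subsetIl (\bigcup_(z in Z) N z) NY).
move: tY; rewrite cardsU cardsD -/NY; lia.
Qed.

Lemma hall_cond_slack N X x0 b : hall_cond N X ->
  (forall Y, Y \proper X -> Y != set0 -> #|\bigcup_(y in Y) N y| != #|Y|) ->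
  x0 \in X -> hall_cond (fun x => N x :\ b) (X :\ x0).
Proof.
move=> hX slack x0X Z sZ; have [->|Z0] := eqVneq Z set0; first by rewrite cards0.
have pZX : Z \proper X.
  apply/properP; split; first exact: subset_trans sZ (subsetDl _ _).
  by exists x0 => //; apply/negP => /(subsetP sZ); rewrite !inE eqxx.
rewrite bigcup_setDr; have := hX Z (proper_sub pZX); have := slack Z pZX Z0.
rewrite (cardsD1 b (\bigcup_(z in Z) N z)); case: (b \in _) => /=; lia.
Qed.

Theorem hall_marriage N X : hall_cond N X -> exists f, matching N X f.
Proof.
move: {2}#|X| (leqnn #|X|) => n; elim: n X N => [|n IH] X N cX hX.
  by move: cX; rewrite leqn0 cards_eq0 => /eqP ->; exists (fun=> b0); apply: matching_set0.
have [/existsP[Y /and3P[pYX Y0 /eqP tY]] | slack] :=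
  boolP [exists Y : {set A}, [&& Y \proper X, Y != set0 & #|\bigcup_(y in Y) N y| == #|Y|]].
- have sYX := proper_sub pYX; have := proper_card pYX; rewrite -card_gt0 in Y0.
  move=> ltYX; have [f1 m1] := IH Y N (ltac:(lia)) (hall_condS sYX hX).
  have [f2 m2] := IH (X :\: Y) _ (ltac:(rewrite cardsDS //; lia)) (hall_cond_tight hX sYX tY).
  exists (fun x => if x \in Y then f1 x else f2 x); apply: (matching_glue sYX m1).
    by apply: matchingS m2 => x _; apply: subsetDl.
  move=> x y xY yXY; apply/eqP=> exy; have /setDP[_] := m2.2 y yXY.
  by rewrite -exy; apply/negP/negPn/bigcupP; exists x => //; apply: m1.2.
have [X0|[x0 x0X]] := set_0Vmem X.
  by exists (fun=> b0); rewrite X0; apply: matching_set0.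
have : 0 < #|\bigcup_(y in [set x0]) N y| by rewrite (leq_trans _ (hX _ _)) ?cards1 ?sub1set.
rewrite big_set1 card_gt0 => /set0Pn[b bN].
have slack' Y : Y \proper X -> Y != set0 -> #|\bigcup_(y in Y) N y| != #|Y|.
  by move=> pYX Y0; apply: contraNN slack => tY; apply/existsP; exists Y; rewrite pYX Y0.
have [f2 m2] := IH (X :\ x0) _ (ltac:(move: cX; rewrite (cardsD1 x0) x0X; lia))
  (hall_cond_slack b hX slack' x0X).
have sx0 : [set x0] \subset X by rewrite sub1set.
exists (fun x => if x \in [set x0] then b else f2 x); apply: matching_glue => //.
- by split=> [x y|x]; rewrite !inE => /eqP-> // /eqP->.
- by apply: matchingS m2 => x _; apply: subsetDl.
- by move=> x y _ yX; have /setD1P[] := m2.2 y yX; rewrite eq_sym.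
Qed.
End Hall.

Section MinHash.
Variables (X : finType) (x0 : X).
Implicit Types (s : {perm X}) (Y U D : {set X}).

Definition perm_rank s (y : X) : nat := enum_rank (s y).

Definition is_smin s Y y := (y \in Y) && [forall z in Y, perm_rank s y <= perm_rank s z].

Definition smin s Y : X := odflt x0 [pick y | is_smin s Y y].

Lemma perm_rank_inj s : injective (perm_rank s).
Proof. by move=> y z /val_inj/enum_rank_inj/perm_inj. Qed.

Lemma is_smin_uniq s Y y z : is_smin s Y y -> is_smin s Y z -> y = z.
Proof.
move=> /andP[yY /forall_inP hy] /andP[zY /forall_inP hz].
by apply: (@perm_rank_inj s); apply/eqP; rewrite eqn_leq hy ?hz.
Qed.

Lemma sminP s Y : Y != set0 -> is_smin s Y (smin s Y).
Proof.
case/set0Pn=> y0 y0Y; rewrite /smin; case: pickP => [//|none].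
have [y yY miny] := arg_minnP (perm_rank s) y0Y; have := none y.
have yinY : y \in Y := yY.
by rewrite /is_smin yinY => /forall_inPn[z zY]; rewrite miny.
Qed.

Lemma smin_eq s Y y : is_smin s Y y -> smin s Y = y.
Proof.
move=> hy; apply: (is_smin_uniq _ hy); apply: sminP.
by apply/set0Pn; exists y; case/andP: hy.
Qed.

Lemma smin_mem s Y : Y != set0 -> smin s Y \in Y.
Proof. by move/(sminP s)/andP=> []. Qed.

Lemma smin_sub s Y Y' : Y' \subset Y -> Y != set0 -> smin s Y \in Y' ->
  smin s Y' = smin s Y.
Proof.
move=> sY Y0 mY'; apply: smin_eq; rewrite /is_smin mY'.
have /andP[_ /forall_inP minY] := sminP s Y0.
by apply/forall_inP=> z /(subsetP sY); apply: minY.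
Qed.

Lemma smin_setU s Y1 Y2 : Y1 != set0 -> smin s (Y1 :|: Y2) \in Y1 :&: Y2 ->
  smin s Y1 = smin s Y2.
Proof.
move=> Y10 /setIP[m1 m2]; have U0 : Y1 :|: Y2 != set0.
  by have [y yY1] := set0Pn _ Y10; apply/set0Pn; exists y; rewrite inE yY1.
by rewrite (smin_sub (subsetUl Y1 Y2) U0 m1) (smin_sub (subsetUr Y1 Y2) U0 m2).
Qed.

Lemma card_is_smin_le U u u' : u \in U -> u' \in U ->
  #|[set s | is_smin s U u]| <= #|[set s | is_smin s U u']|.
Proof.
move=> uU u'U; set t := tperm u u'.
rewrite -(card_imset _ (mulgI t)); apply/subset_leq_card/subsetP=> s' /imsetP[s].
rewrite !inE => /andP[_ /forall_inP mins] ->{s'}; rewrite /is_smin u'U /=.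
have tU v : v \in U -> t v \in U.
  by move=> vU; rewrite permE /=; case: ifP => _ //; case: ifP.
by apply/forall_inP=> z zU; rewrite /perm_rank !permM tpermR; apply: mins (tU z zU).
Qed.

Lemma card_smin_in U D : U != set0 -> D \subset U ->
  #|U| * #|[set s | smin s U \in D]| = #|D| * #|{perm X}|.
Proof.
case/set0Pn=> u uU DU; set c := #|[set s | is_smin s U u]|.
have card_minE (E : {set X}) : E \subset U -> #|[set s | smin s U \in E]| = #|E| * c.
  move=> EU; rewrite -sum1_card (partition_big (smin^~ U) (mem E)); last by move=> s; rewrite inE.
  rewrite -sum_nat_const; apply: eq_bigr => v vE; have vU := subsetP EU v vE.
  have -> : c = #|[set s | is_smin s U v]| by apply/eqP; rewrite eqn_leq !card_is_smin_le.
  rewrite -sum1_card; apply: eq_bigl => s; rewrite !inE.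
  apply/andP/idP=> [[_ /eqP <-]|/smin_eq ->]; last by rewrite eqxx.
  by apply: sminP; apply/set0Pn; exists u.
have -> : #|{perm X}| = #|U| * c.
  rewrite -(card_minE U (subxx U)); apply: eq_card => s; rewrite !inE smin_mem //.
  by apply/set0Pn; exists u.
by rewrite card_minE // mulnCA.
Qed.

(* Average [card_smin_in] over all permutations. *)
Lemma exists_perm_smin_rare (I : finType) (U D : I -> {set X}) (N d : nat) :
  (forall i, U i != set0) -> (forall i, D i \subset U i) ->
  (forall i, N <= #|U i|) -> (forall i, #|D i| <= d) ->
  exists s, N * #|[set i | smin s (U i) \in D i]| <= #|I| * d.
Proof.
move=> U0 DU NU Dd; pose hits s := #|[set i | smin s (U i) \in D i]|.
have sum_hits : N * (\sum_s hits s) <= #|I| * d * #|{perm X}|.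
  have -> : \sum_s hits s = \sum_i #|[set s | smin s (U i) \in D i]|.
    rewrite /hits; under eq_bigr do rewrite -sum1_card big_mkcond.
    rewrite exchange_big /=; apply: eq_bigr => i _.
    by rewrite -sum1_card [RHS]big_mkcond; apply: eq_bigr => s _; rewrite !inE.
  rewrite big_distrr -mulnA -sum_nat_const /= leq_sum // => i _.
  apply: (@leq_trans (#|U i| * #|[set s | smin s (U i) \in D i]|)).
    by rewrite leq_mul2r NU orbT.
  by rewrite card_smin_in // leq_mul2r Dd orbT.
have [s hs|many] := pickP (fun s => N * hits s <= #|I| * d); first by exists s.
have : \sum_(s : {perm X}) (#|I| * d).+1 <= N * \sum_s hits s.
  by rewrite big_distrr leq_sum // => s _; rewrite ltnNge many.
have : 0 < #|{perm X}| by apply/card_gt0P; exists 1%g.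
rewrite sum_nat_const; move: sum_hits; set P := #|{perm X}|; nia.
Qed.
End MinHash.

Section GroupLaws.
Variables (G : Type) (mul : G -> G -> G) (one : G) (inv : G -> G).
Hypothesis HG : is_group mul one inv.

Lemma gmulA x y z : mul x (mul y z) = mul (mul x y) z. Proof. exact: grp_assoc HG x y z. Qed.
Lemma gmul1 x : mul one x = x. Proof. exact: grp_mul1 HG x. Qed.
Lemma gmulV x : mul (inv x) x = one. Proof. exact: grp_mulV HG x. Qed.

Lemma gmulI a : injective (mul a).
Proof. by move=> x y h; rewrite -(gmul1 x) -(gmul1 y) -(gmulV a) -!gmulA h. Qed.

Lemma gmulr1 x : mul x one = x.
Proof. by apply: (@gmulI (inv x)); rewrite gmulA gmulV gmul1. Qed.

Lemma gmulrV x : mul x (inv x) = one.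
Proof. by apply: (@gmulI (inv x)); rewrite gmulA gmulV gmul1 gmulr1. Qed.

Lemma ginvK x : inv (inv x) = x.
Proof. by apply: (@gmulI (inv x)); rewrite gmulV gmulrV. Qed.

Lemma ginvM x y : inv (mul x y) = mul (inv y) (inv x).
Proof.
by apply: (@gmulI (mul x y)); rewrite gmulrV -gmulA [mul y _]gmulA gmulrV gmul1 gmulrV.
Qed.

Lemma gmulKV x y : mul (inv x) (mul x y) = y. Proof. by rewrite gmulA gmulV gmul1. Qed.
Lemma gmulVK x y : mul x (mul (inv x) y) = y. Proof. by rewrite gmulA gmulrV gmul1. Qed.
End GroupLaws.

Definition lmul (G : Type) (mul : G -> G -> G) (a : {classic G}) : {classic G} -> {classic G} :=
  mul a.

Lemma lmul_inj (G : Type) (mul : G -> G -> G) (one : G) (inv : G -> G) :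
  is_group mul one inv -> forall a, injective (lmul mul a).
Proof. by move=> HG a; apply: (gmulI HG). Qed.
Arguments lmul_inj {G mul one inv} HG a.

Lemma List_InP (T : eqType) (x : T) (s : seq T) : List.In x s <-> x \in s.
Proof.
elim: s => [|a s IH] //=; rewrite inE; split.
  by case=> [->|/IH ->]; rewrite ?eqxx ?orbT.
by case/orP=> [/eqP ->|/IH]; [left|right].
Qed.

Lemma bigmin_leq (I : finType) (P : pred I) (w : I -> nat) x i0 :
  P i0 -> \big[minn/x]_(i | P i) w i <= w i0.
Proof.
move=> Pi0; rewrite unlock; have : i0 \in index_enum I by rewrite mem_index_enum.
elim: (index_enum I) => [|a r IH] //=; rewrite inE => /orP[/eqP <-|i0r].
  by rewrite Pi0 geq_minl.
by case: ifP => _; rewrite ?IH // (leq_trans (geq_minr _ _)) ?IH.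
Qed.

(* Sweep the vertices by increasing [key]: the boundary vertices outside [Z]
   all carry the key at which the sweep currently stands. *)
Section SweepoutByKey.
Variables (G : Type) (C : finType) (act : G -> C -> C) (S : seq G).
Variables (key : C -> nat) (Z : {set C}) (N : nat).
Hypothesis key0 : forall c, (key c == 0) = (c \in Z).
Hypothesis key_adj : forall v w, v \notin Z -> schreier_adj act S v w ->
  key w = key v \/ key w = 0.
Hypothesis card_key : forall k, 0 < k -> #|[set c | key c == k]| <= N.

Let L := sort (fun a b => key a <= key b) (enum C).

Let perm_L : perm_eq L (enum C). Proof. by rewrite perm_sort. Qed.
Let uniq_L : uniq L. Proof. by rewrite (perm_uniq perm_L) enum_uniq. Qed.
Let size_L : size L = #|C|. Proof. by rewrite (perm_size perm_L) cardE. Qed.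
Let mem_L x : x \in L. Proof. by rewrite (perm_mem perm_L) mem_enum. Qed.

Let key_take_drop j v w : v \in take j L -> w \in drop j L -> key v <= key w.
Proof.
have tr : transitive (fun a b : C => key a <= key b) by move=> ? ? ?; apply: leq_trans.
have := sort_sorted (fun a b : C => leq_total (key a) (key b)) (enum C).
rewrite -/L (sorted_pairwise tr) -{1}(cat_take_drop j L) pairwise_cat.
by case/andP=> /allrelP h _; apply: h.
Qed.

Definition key_sweepout : {ffun 'I_(#|C|).+1 -> {set C}} :=
  [ffun j : 'I_(#|C|).+1 => [set x in take j L]].

Lemma key_sweepoutP : is_sweepout key_sweepout.
Proof.
rewrite /is_sweepout -!andbA !ffunE /=; apply/and4P; split.
- by apply/eqP/setP=> x; rewrite !inE take0.
- by apply/eqP/setP=> x; rewrite !inE -size_L take_size mem_L.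
- apply/forallP=> j; rewrite ffunE cardsE (card_uniqP (take_uniq _ uniq_L)).
  by rewrite size_takel // size_L -ltnS.
- apply/forallP=> j; apply/forallP=> k; apply/implyP=> jk; rewrite !ffunE.
  by apply/subsetP=> x; rewrite !inE -(subnKC jk) takeD mem_cat => ->.
Qed.

Let vboundary_key j v : v \in vboundary act S [set x in take j L] -> v \notin Z ->
  v \in take j L /\ exists2 w, w \in drop j L & key w = key v.
Proof.
rewrite !inE => /andP[vT /existsP[w /andP[wT adj]]] vZ; split=> //.
have wD : w \in drop j L.
  by move: (mem_L w) wT; rewrite -{1}(cat_take_drop j L) mem_cat inE => /orP[->|].
exists w => //; case: (key_adj vZ adj) => // w0.
by move: (key_take_drop vT wD); rewrite w0 leqn0 key0 (negbTE vZ).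
Qed.

Lemma card_key_vboundary j : #|vboundary act S [set x in take j L]| <= #|Z| + N.
Proof.
set B := vboundary _ _ _; have [sBZ|/subsetPn[v0 v0B v0Z]] := boolP (B \subset Z).
  by rewrite (leq_trans (subset_leq_card sBZ)) ?leq_addr.
have [v0T [w0 w0D kw0]] := vboundary_key v0B v0Z.
have keyB v : v \in B -> v \notin Z -> key v = key v0.
  move=> vB vZ; have [vT [w wD kw]] := vboundary_key vB vZ.
  by apply/eqP; rewrite eqn_leq -{1}kw0 -{2}kw (key_take_drop vT w0D) (key_take_drop v0T wD).
have sBZk : B \subset Z :|: [set c | key c == key v0].
  by apply/subsetP=> v vB; rewrite !inE; case: (boolP (v \in Z)) => //= vZ; rewrite keyB.
apply: leq_trans (subset_leq_card sBZk) (leq_trans (leq_card_setU _ _) _).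
by rewrite leq_add2l card_key // lt0n key0.
Qed.

Lemma sweepout_width_key : sweepout_width act S <= #|Z| + N.
Proof.
apply: leq_trans (bigmin_leq _ _ key_sweepoutP) _.
by apply/bigmax_leqP=> j _; rewrite ffunE; apply: card_key_vboundary.
Qed.
End SweepoutByKey.

Lemma sum_ord_between n a b : \sum_(t < n) (a <= t < b) = minn b n - a.
Proof.
elim: n => [|n IH]; first by rewrite big_ord0; lia.
by rewrite big_ord_recr /= IH; case: (leqP a n) => ha; case: (ltnP n b) => hb /=; lia.
Qed.

Lemma sum_count_eq (T : Type) (C : finType) (h : T -> C) (L : seq T) :
  \sum_(x : C) count (fun f => h f == x) L = size L.
Proof.
elim: L => [|a L IH] /=; first by rewrite big1.
rewrite big_split /= IH (bigD1 (h a)) //= eqxx big1 // => x.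
by rewrite eq_sym => /negbTE ->.
Qed.

Lemma sum_count_subn (T : eqType) (C : finType) (h : T -> C) (L1 L2 : seq T) :
  uniq L1 ->
  \sum_(x : C) (count (fun f => h f == x) L1 - count (fun f => h f == x) L2)
  <= count (fun f => f \notin L2) L1.
Proof.
move=> uL1; rewrite -size_filter -(sum_count_eq h) leq_sum // => x _.
set p := fun f => h f == x.
have -> : count p L1 = count (mem L2) (filter p L1) + count (predC (mem L2)) (filter p L1).
  by rewrite count_predC size_filter.
have -> : count (predC (mem L2)) (filter p L1) = count p [seq f <- L1 | f \notin L2].
  by rewrite !count_filter; apply: eq_count => f; rewrite /= andbC.
suff : count (mem L2) (filter p L1) <= count p L2 by lia.
rewrite count_filter -!size_filter uniq_leq_size ?filter_uniq // => f.
by rewrite !mem_filter => /andP[/andP[fL2 pf] _]; apply/andP.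
Qed.

(* Min-hashing the multisets [F^-1 c] labels every coset [c] by an element of
   [F^-1 c]; a Folner set [F] makes the labels of [c] and [s c] agree for all
   but a small fraction of the choices of the hash permutation. *)
Section FolnerSweepout.
Variables (G : Type) (mul : G -> G -> G) (one : G) (inv : G -> G).
Hypothesis HG : is_group mul one inv.
Local Notation gT := {classic G}.
Variables (C : finType) (act : G -> C -> C) (c0 : C).
Hypothesis act_mul : forall g h c, act (mul g h) c = act g (act h c).
Hypothesis act1 : forall c, act one c = c.
Variables (S F : seq gT) (e : nat).
Hypothesis Ssym : forall s, s \in S -> (inv s : gT) \in S.
Hypothesis uniq_F : uniq F.
Hypothesis F_gt0 : 0 < size F.
Hypothesis folner_F : forall s, s \in S -> count (fun f => lmul mul s f \notin F) F <= e.

Local Notation N := (size F).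
Local Notation X := (C * 'I_N.+1)%type.

Definition fmult (c x : C) := count (fun f : gT => act (inv f) c == x) F.

(* The multiset [{f^-1 c | f in F}], with [x] of multiplicity [k] coded as
   the pairs [(x, 0), ..., (x, k - 1)]. *)
Definition fcode (c : C) : {set X} := [set p : X | p.2 < fmult c p.1].

Lemma card_between (m1 m2 : C -> nat) : (forall x, m1 x <= N) ->
  #|[set p : X | m2 p.1 <= p.2 < m1 p.1]| = \sum_x (m1 x - m2 x).
Proof.
move=> m1N; rewrite -sum1_card big_mkcond /=.
under eq_bigr => p _ do rewrite inE -[if _ then _ else _]/(nat_of_bool (_ <= p.2 < _)).
rewrite -(pair_bigA _ (fun x (t : 'I_N.+1) => nat_of_bool (m2 x <= t < m1 x))).
apply: eq_bigr => x _; rewrite sum_ord_between (minn_idPl _) //.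
exact: leq_trans (m1N x) _.
Qed.

Lemma card_fcode c : #|fcode c| = N.
Proof.
have -> : fcode c = [set p : X | 0 <= p.2 < fmult c p.1] by apply/setP=> p; rewrite !inE.
rewrite (@card_between (fmult c) (fun=> 0)) => [|x]; last exact: count_size.
by rewrite -(sum_count_eq (fun f : gT => act (inv f) c) F); apply: eq_bigr => x _; rewrite subn0.
Qed.

Lemma fcode_neq0 c : fcode c != set0.
Proof. by rewrite -card_gt0 card_fcode. Qed.

Lemma fmult_act s c x :
  fmult (act s c) x = count (fun g : gT => act (inv g) c == x) (map (lmul mul (inv s)) F).
Proof.
by rewrite /fmult count_map; apply: eq_count => f /=; rewrite (ginvM HG) (ginvK HG) act_mul.
Qed.

Lemma card_fcodeD s c : s \in S -> #|fcode c :\: fcode (act s c)| <= e.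
Proof.
move=> sS; have -> : fcode c :\: fcode (act s c) =
    [set p : X | fmult (act s c) p.1 <= p.2 < fmult c p.1].
  by apply/setP => p; rewrite !inE -leqNgt.
rewrite card_between => [|x]; last exact: count_size.
under eq_bigr do rewrite fmult_act; rewrite /fmult.
apply: leq_trans (sum_count_subn _ _ uniq_F) (leq_trans _ (folner_F sS)).
apply/eq_leq/eq_count => f /=.
by rewrite -{1}(gmulKV HG s f) (mem_map (lmul_inj HG (inv s))).
Qed.

Lemma card_fcodeDr s c : s \in S -> #|fcode (act s c) :\: fcode c| <= e.
Proof.
move=> sS; have -> : fcode (act s c) :\: fcode c =
    [set p : X | fmult c p.1 <= p.2 < fmult (act s c) p.1].
  by apply/setP => p; rewrite !inE -leqNgt.
rewrite card_between => [|x]; last exact: count_size.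
under eq_bigr do rewrite fmult_act; rewrite /fmult.
have uF' : uniq (map (lmul mul (inv s)) F).
  by rewrite map_inj_uniq //; apply: (lmul_inj HG (inv s)).
by apply: leq_trans (sum_count_subn _ _ uF') _; rewrite count_map; apply: folner_F (Ssym sS).
Qed.

Section Labelling.
Variable sg : {perm X}.

Definition flabel c : C := (smin (c0, ord0) sg (fcode c)).1.

Lemma card_flabel l : #|[set c | flabel c == l]| <= N.
Proof.
apply: leq_trans (_ : #|[set x in map (fun f : gT => act f l) F]| <= N); last first.
  by rewrite cardsE (leq_trans (card_size _)) // size_map.
apply/subset_leq_card/subsetP=> c; rewrite !inE => /eqP <-{l}.
have := smin_mem (c0, ord0) sg (fcode_neq0 c); rewrite /flabel inE /fmult.
case: (smin _ _ _) => x t /= ht; have : 0 < count (fun f : gT => act (inv f) c == x) F.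
  exact: leq_ltn_trans ht.
rewrite -has_count => /hasP[f fF /eqP <-]; apply/mapP; exists f => //.
by rewrite -act_mul (gmulrV HG) act1.
Qed.

Definition flabel_break : {set C} :=
  [set c | has (fun s : gT => flabel c != flabel (act s c)) S].

Definition flabel_key c : nat :=
  if c \in flabel_break then 0 else (enum_rank (flabel c)).+1.

Lemma sweepout_width_flabel : sweepout_width act S <= #|flabel_break| + N.
Proof.
apply: (sweepout_width_key (key := flabel_key)) => [c|v w|k k0].
- by rewrite /flabel_key; case: ifP.
- move=> vZ /andP[_ /(@hasP gT)[s sS /eqP <-]]; rewrite /flabel_key (negbTE vZ).
  move: vZ; rewrite inE => /hasPn/(_ s sS); rewrite negbK eq_sym => /eqP ->.
  by case: ifP; [right|left].
- move: k0; have [c1 /eqP <- k0|none _] := pickP (fun c => flabel_key c == k); last first.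
    by rewrite (_ : [set c | _] = set0) ?cards0 //; apply/setP=> c; rewrite !inE none.
  apply: leq_trans (card_flabel (flabel c1)); apply/subset_leq_card/subsetP=> c.
  have [Bc1|nBc1] := boolP (c1 \in flabel_break); first by rewrite /flabel_key Bc1 in k0.
  rewrite inE /flabel_key (negbTE nBc1) inE.
  by case: ifP => // _ /eqP[] /ord_inj/enum_rank_inj ->.
Qed.
End Labelling.

Let edge_target (i : C * 'I_(size S)) := act (nth one S i.2) i.1.
Let edge_codeU i := fcode i.1 :|: fcode (edge_target i).
Let edge_codeD i := edge_codeU i :\: (fcode i.1 :&: fcode (edge_target i)).

Lemma edge_codeU_neq0 i : edge_codeU i != set0.
Proof. by rewrite setU_eq0 negb_and fcode_neq0. Qed.

Lemma card_flabel_break sg :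
  #|flabel_break sg| <= #|[set i | smin (c0, ord0) sg (edge_codeU i) \in edge_codeD i]|.
Proof.
apply: leq_trans (leq_imset_card fst _); apply/subset_leq_card/subsetP=> c.
rewrite inE => /(@hasP gT)[s sS hs]; have iS : index s S < size S by rewrite index_mem.
apply/imsetP; exists (c, Ordinal iS) => //; rewrite inE; apply: contraR hs.
have := smin_mem (c0, ord0) sg (edge_codeU_neq0 (c, Ordinal iS)).
rewrite /edge_codeD /edge_codeU /edge_target /= (@nth_index gT one s S sS) => mU.
by rewrite in_setD mU andbT negbK /flabel => /(smin_setU (fcode_neq0 c)) ->.
Qed.

Lemma sweepout_width_folner : N * sweepout_width act S <= 2 * e * size S * #|C| + N * N.
Proof.
have [sg hsg] : exists sg, N * #|[set i | smin (c0, ord0) sg (edge_codeU i) \in edge_codeD i]| <=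
    #|{: C * 'I_(size S)}| * (e + e).
  apply: exists_perm_smin_rare => i; first exact: edge_codeU_neq0; first exact: subsetDl.
    by rewrite -{1}(card_fcode i.1) subset_leq_card // subsetUl.
  set c1 := fcode i.1; set c2 := fcode (edge_target i).
  apply: (@leq_trans #|(c1 :\: c2) :|: (c2 :\: c1)|).
    apply/subset_leq_card/subsetP=> p.
    rewrite /edge_codeD /edge_codeU -/c1 -/c2 !(in_setU, in_setD, in_setI).
    by case: (p \in fcode i.1); case: (p \in fcode (edge_target i)).
  by rewrite (leq_trans (leq_card_setU _ _)) // leq_add ?card_fcodeD ?card_fcodeDr ?mem_nth.
have := sweepout_width_flabel sg; have := card_flabel_break sg.
rewrite card_prod card_ord in hsg; nia.
Qed.
End FolnerSweepout.

Lemma bernoulli_nat M k : expn M k.+1 + k * expn M k <= M * expn (M + 1) k.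
Proof.
elim: k => [|k IH]; first by rewrite expn0 expn1 mul0n addn0 muln1.
move: IH; rewrite !expnS; set a := expn (M + 1) k; set b := expn M k; nia.
Qed.

Lemma double_expn M : 0 < M -> 2 * expn M M <= expn (M + 1) M.
Proof. by move=> M0; have := bernoulli_nat M M; rewrite expnS; nia. Qed.

Section Expansion.
Variables (G : Type) (mul : G -> G -> G) (one : G) (inv : G -> G).
Hypothesis HG : is_group mul one inv.
Local Notation gT := {classic G}.
Variable S : seq gT.

Definition expand (A : seq gT) : seq gT :=
  undup (A ++ flatten [seq map (lmul mul s) A | s <- S]).

Lemma mem_expand x A :
  (x \in expand A) = (x \in A) || has (fun s => has (fun a => x == lmul mul s a) A) S.
Proof.
rewrite mem_undup mem_cat; congr orb; apply/flatten_mapP/hasP.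
  by case=> s sS /mapP[a aA ->]; exists s => //; apply/hasP; exists a.
by case=> s sS /hasP[a aA /eqP ->]; exists s => //; apply: map_f.
Qed.

Lemma expand_uniq A : uniq (expand A). Proof. exact: undup_uniq. Qed.

Lemma expand_sub A : {subset A <= expand A}.
Proof. by move=> x xA; rewrite mem_expand xA. Qed.

Lemma size_expand A s : uniq A -> s \in S ->
  size A + count (fun f => lmul mul s f \notin A) A <= size (expand A).
Proof.
move=> uA sS; set L := A ++ map (lmul mul s) (filter (fun f => lmul mul s f \notin A) A).
have -> : size A + count (fun f => lmul mul s f \notin A) A = size L.
  by rewrite size_cat size_map size_filter.
have uL : uniq L.
  rewrite cat_uniq uA /= map_inj_uniq ?filter_uniq ?andbT //; last exact: (lmul_inj HG s).
  by apply/hasP=> -[x /mapP[f]]; rewrite mem_filter => /andP[nfA _] -> fA; rewrite fA in nfA.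
apply: uniq_leq_size uL _ => x.
rewrite /L mem_cat => /orP[/expand_sub //|/mapP[f]].
rewrite mem_filter => /andP[_ fA] ->; rewrite mem_expand.
by apply/orP; right; apply/hasP; exists s => //; apply/hasP; exists f.
Qed.

Lemma mem_iter_expand k x A :
  (x \in iter k expand A) = has (fun a => x \in iter k expand [:: a]) A.
Proof.
elim: k x => [|k IH] x /=.
  by apply/idP/hasP => [xA|[a aA]]; [exists x => //; rewrite inE|rewrite inE => /eqP ->].
rewrite mem_expand IH; apply/idP/hasP.
  case/orP=> [/hasP[a aA h]|/hasP[s sS /hasP[y]]]; first by exists a; rewrite // mem_expand h.
  rewrite IH => /hasP[a aA ya] /eqP ->; exists a => //.
  by rewrite mem_expand; apply/orP; right; apply/hasP; exists s => //; apply/hasP; exists y.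
case=> a aA; rewrite mem_expand => /orP[h|/hasP[s sS /hasP[y ya /eqP ->]]].
  by apply/orP; left; apply/hasP; exists a.
apply/orP; right; apply/hasP; exists s => //; apply/hasP; exists y => //.
by rewrite IH; apply/hasP; exists a.
Qed.

Fixpoint words k : seq gT :=
  if k is k'.+1 then words k' ++ [seq lmul mul s w | s <- S, w <- words k'] else [:: one].

Lemma mem_iter_expand1 k g x :
  x \in iter k expand [:: g] -> exists2 w, w \in words k & x = mul w g.
Proof.
elim: k x => [|k IH] x /=; first by rewrite inE => /eqP ->; exists one; rewrite ?inE ?(gmul1 HG).
rewrite mem_expand => /orP[/IH[w wW ->]|/hasP[s sS /hasP[y /IH[w wW ->] /eqP ->]]].
  by exists w => //; rewrite mem_cat wW.
exists (lmul mul s w); last by rewrite /lmul (gmulA HG).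
by rewrite mem_cat; apply/orP; right; apply/allpairsP; exists (s, w).
Qed.

Variable M : nat.
Hypothesis M_gt0 : 0 < M.
Hypothesis no_folner : forall F : seq gT, uniq F -> 0 < size F ->
  exists2 s, s \in S & size F < M * count (fun f => lmul mul s f \notin F) F.

Lemma size_expand_grow A : uniq A -> 0 < size A ->
  (M + 1) * size A <= M * size (expand A).
Proof.
move=> uA A0; have [s sS hs] := no_folner uA A0.
apply: leq_trans (_ : M * (size A + count (fun f => lmul mul s f \notin A) A) <= _).
  by rewrite mulnDr mulnDl mul1n leq_add2l ltnW.
by rewrite leq_mul2l size_expand ?orbT.
Qed.

Lemma iter_expand_uniq k A : uniq A -> uniq (iter k expand A).
Proof. by case: k => [|k] //= _; apply: expand_uniq. Qed.

Lemma iter_expand_sub k A : {subset A <= iter k expand A}.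
Proof. by elim: k => //= k IH x /IH; apply: expand_sub. Qed.

Lemma size_iter_expand k A : uniq A -> 0 < size A ->
  expn (M + 1) k * size A <= expn M k * size (iter k expand A).
Proof.
move=> uA A0; elim: k => [|k IH]; first by rewrite !expn0 !mul1n.
have uAk := iter_expand_uniq k uA.
have Ak0 : 0 < size (iter k expand A).
  by apply: leq_trans A0 (uniq_leq_size uA (@iter_expand_sub k A)).
have := size_expand_grow uAk Ak0; move: IH; rewrite !expnS /=.
set a := expn (M + 1) k; set b := expn M k.
set x := size (iter k _ _); set y := size (expand _); nia.
Qed.

Lemma size_iter_expand_double A : uniq A -> 0 < size A ->
  2 * size A <= size (iter M expand A).
Proof.
move=> uA A0; have := size_iter_expand M uA A0; have := double_expn M_gt0.
have : 0 < expn M M by rewrite expn_gt0 M_gt0.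
set a := expn (M + 1) M; set b := expn M M; nia.
Qed.
End Expansion.

Section FiniteMatching.
Variables (G : Type) (mul : G -> G -> G) (one : G) (inv : G -> G).
Hypothesis HG : is_group mul one inv.
Local Notation gT := {classic G}.
Variables (S : seq gT) (M : nat).
Hypothesis M_gt0 : 0 < M.
Hypothesis no_folner : forall F : seq gT, uniq F -> 0 < size F ->
  exists2 s, s \in S & size F < M * count (fun f => lmul mul s f \notin F) F.

Definition ball (g : gT) : seq gT := iter M (expand mul S) [:: g].

Lemma size_pairs_le_expand (P : seq (gT * bool)) : uniq P ->
  size P <= size (iter M (expand mul S) (undup (map fst P))).
Proof.
case: P => [//|y P] uP; set Fs := undup (map fst (y :: P)).
have Fs0 : 0 < size Fs.
  have : y.1 \in Fs by rewrite mem_undup map_f ?mem_head.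
  by case: (Fs).
apply: leq_trans (size_iter_expand_double HG M_gt0 no_folner (undup_uniq _) Fs0).
have -> : 2 * size Fs = size [seq (f, b) | f <- Fs, b <- [:: true; false]].
  by rewrite size_allpairs mulnC.
apply: uniq_leq_size => // z zP; apply/allpairsP; exists (z.1, z.2); split=> /=.
- by rewrite mem_undup map_f.
- by case: z.2.
- by case: z {zP}.
Qed.

(* Hall's condition holds by the doubling of [iter M expand]. *)
Lemma finite_matching (P : seq (gT * bool)) : exists phi : gT * bool -> gT,
  {in P &, injective phi} /\ forall y, y \in P -> phi y \in ball y.1.
Proof.
pose Y := undup P; pose Z : seq gT := undup ((one : gT) :: flatten [seq ball y.1 | y <- Y]).
have oneZ : (one : gT) \in Z by rewrite mem_undup mem_head.
pose Nb (a : seq_sub Y) : {set seq_sub Z} := [set b | val b \in ball (val a).1].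
have hall : hall_cond Nb [set: seq_sub Y].
  move=> Yi _; pose Q := [seq val a | a <- enum Yi].
  have uQ : uniq Q by rewrite map_inj_uniq ?enum_uniq //; apply: val_inj.
  rewrite cardE -(size_map val) -/Q (leq_trans (size_pairs_le_expand uQ)) //.
  rewrite cardE -(size_map val) uniq_leq_size ?iter_expand_uniq ?undup_uniq // => x.
  rewrite mem_iter_expand => /hasP[g]; rewrite mem_undup => /mapP[_ /mapP[a aYi ->] ->] xb.
  have xZ : x \in Z.
    rewrite mem_undup inE; apply/orP; right; apply/flatten_mapP.
    by exists (val a); [exact: valP | rewrite /ball].
  apply/mapP; exists (SeqSub xZ) => //; rewrite mem_enum; apply/bigcupP.
  by exists a; [rewrite -mem_enum | rewrite inE].
have [f [finj fN]] := hall_marriage (SeqSub oneZ) hall.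
exists (fun y => if insub y is Some a then val (f a) else one); split.
  move=> y y' yP y'P; have yY : y \in Y by rewrite mem_undup.
  have y'Y : y' \in Y by rewrite mem_undup.
  rewrite (insubT (mem Y) yY) (insubT (mem Y) y'Y) => /val_inj/finj.
  by move=> /(_ (in_setT _) (in_setT _)) [].
move=> y yP; have yY : y \in Y by rewrite mem_undup.
by rewrite (insubT (mem Y) yY); have := fN (SeqSub yY) (in_setT _); rewrite inE.
Qed.
End FiniteMatching.

(* Koenig-style compactness: each point has finitely many admissible values,
   so values extendable to every finite prefix can be fixed point by point. *)
Section Compactness.
Variables (L V : eqType) (nb : L -> seq V) (e : nat -> L) (v0 : V).
Hypothesis e_surj : forall y, exists k, e k = y.

Definition valid_on (phi : L -> V) (P : seq L) :=
  {in P &, injective phi} /\ forall y, y \in P -> phi y \in nb y.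

Hypothesis finite_valid : forall P : seq L, exists phi, valid_on phi P.

Definition eprefix n := map e (iota 0 n).

Lemma mem_eprefix x n : x \in eprefix n -> exists2 i, i < n & x = e i.
Proof. by case/mapP=> i; rewrite mem_iota add0n => /andP[_ ilt] ->; exists i. Qed.

Lemma eprefix_mem i n : i < n -> e i \in eprefix n.
Proof. by move=> ilt; apply: map_f; rewrite mem_iota add0n ilt. Qed.

Lemma eprefixS m m' : m <= m' -> {subset eprefix m <= eprefix m'}.
Proof. by move=> le x /mem_eprefix[i ilt ->]; apply: eprefix_mem; apply: leq_trans le. Qed.

Lemma valid_onS phi P P' : {subset P' <= P} -> valid_on phi P -> valid_on phi P'.
Proof.
by move=> sP [phiI phiN]; split=> [x y /sP xP /sP yP|y /sP]; [apply: phiI|apply: phiN].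
Qed.

Definition extendable n (p : L -> V) := forall m, exists phi,
  valid_on phi (eprefix m) /\ forall i, i < n -> phi (e i) = p (e i).

Lemma extendable_valid n p : extendable n p -> valid_on p (eprefix n).
Proof.
case/(_ n)=> phi [[phiI phiN] phip].
have eq_p y : y \in eprefix n -> phi y = p y by case/mem_eprefix=> i ilt ->; apply: phip.
split=> [x y xP yP|y yP]; last by rewrite -(eq_p y yP); apply: phiN.
by rewrite -(eq_p x xP) -(eq_p y yP); apply: phiI.
Qed.

Lemma bound_seq (Q : V -> nat -> Prop) (l : seq V) :
  (forall v m m', m <= m' -> Q v m -> Q v m') ->
  (forall v, v \in l -> exists m, Q v m) -> exists m, forall v, v \in l -> Q v m.
Proof.
move=> Qmono; elim: l => [|a l IH] hl; first by exists 0.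
have [ma Qa] := hl a (mem_head _ _).
have [ml Ql] := IH (fun v vl => hl v (@mem_behead _ (a :: l) v vl)).
exists (maxn ma ml) => v; rewrite inE => /orP[/eqP ->|vl].
  by apply: Qmono Qa; apply: leq_maxl.
by apply: Qmono (Ql v vl); apply: leq_maxr.
Qed.

Lemma extendableS n p :
  extendable n p -> exists p', extendable n.+1 p' /\ forall i, i < n -> p' (e i) = p (e i).
Proof.
move=> hE; have [/existsP[j /eqP ej]|fresh] := boolP [exists j : 'I_n, e j == e n].
  exists p; split=> // m; have [phi [hv ha]] := hE m; exists phi; split=> // i.
  by rewrite ltnS leq_eqVlt => /orP[/eqP ->|]; [rewrite -ej; apply: ha | apply: ha].
have neq i : i < n -> e i != e n.
  by move=> ilt; apply: contraNneq fresh => h; apply/existsP; exists (Ordinal ilt); rewrite h.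
apply: NNPP => nex; pose upd (v : V) y := if y == e n then v else p y.
have bad v : v \in nb (e n) -> exists m, forall phi, valid_on phi (eprefix m) ->
    ~ (forall i, i < n.+1 -> phi (e i) = upd v (e i)).
  move=> _; apply: NNPP => nm; apply: nex; exists (upd v); split; last first.
    by move=> i ilt; rewrite /upd (negbTE (neq i ilt)).
  move=> m; apply: NNPP => nm2; apply: nm; exists m => phi hv ha; apply: nm2.
  by exists phi.
have [Mx hMx] := bound_seq (fun v m m' le h phi hv => h phi (valid_onS (eprefixS le) hv)) bad.
have [phi [hv ha]] := hE (maxn Mx n.+1).
have enP : e n \in eprefix (maxn Mx n.+1) by apply: eprefix_mem; rewrite leq_max ltnSn orbT.
apply: (hMx _ (hv.2 _ enP) phi (valid_onS (eprefixS (leq_maxl _ _)) hv)) => i.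
rewrite ltnS leq_eqVlt => /orP[/eqP ->|ilt]; first by rewrite /upd eqxx.
by rewrite /upd (negbTE (neq i ilt)); apply: ha.
Qed.

Fixpoint approx n : L -> V :=
  if n is n'.+1 then
    epsilon (inhabits (fun=> v0))
      (fun p' => extendable n p' /\ forall i, i < n' -> p' (e i) = approx n' (e i))
  else fun=> v0.

Lemma approxP n : extendable n (approx n) /\
  forall i, i < n.-1 -> approx n (e i) = approx n.-1 (e i).
Proof.
elim: n => [|n [IH _]]; last exact: epsilon_spec (extendableS IH).
by split=> // m; have [phi hv] := finite_valid (eprefix m); exists phi.
Qed.

Lemma approx_stable n n' i : n <= n' -> i < n -> approx n' (e i) = approx n (e i).
Proof.
elim: n' => [|n' IH]; first by rewrite leqn0 => /eqP ->.
rewrite leq_eqVlt => /orP[/eqP ->//|]; rewrite ltnS => le ilt.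
by rewrite (approxP n'.+1).2 //= ?IH //; apply: leq_trans ilt le.
Qed.

Theorem exists_valid : exists phi : L -> V, injective phi /\ forall y, phi y \in nb y.
Proof.
have ex y : exists k, e k == y by have [k <-] := e_surj y; exists k.
pose k y := ex_minn (ex y).
have ek y : e (k y) = y by rewrite /k; case: ex_minnP => m /eqP.
exists (fun y => approx (k y).+1 y); split=> [y y'|y].
  set n := (maxn (k y) (k y')).+1.
  have hy : approx n (e (k y)) = approx (k y).+1 (e (k y)).
    by apply: approx_stable; rewrite // /n ltnS leq_maxl.
  have hy' : approx n (e (k y')) = approx (k y').+1 (e (k y')).
    by apply: approx_stable; rewrite // /n ltnS leq_maxr.
  rewrite !ek in hy hy'; rewrite -hy -hy'.
  have [approxI _] := extendable_valid (approxP n).1; apply: approxI.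
    by rewrite -(ek y); apply: eprefix_mem; rewrite ltnS leq_maxl.
  by rewrite -(ek y'); apply: eprefix_mem; rewrite ltnS leq_maxr.
have [_ approxN] := extendable_valid (approxP (k y).+1).1; apply: approxN.
by rewrite -{1}(ek y); apply: eprefix_mem.
Qed.
End Compactness.

Fixpoint rsum (f : nat -> R) (n : nat) : R :=
  if n is k.+1 then (rsum f k + f k)%R else 0%R.

Section FinitelyAdditiveMeasure.
Variables (G : Type) (m : (G -> Prop) -> R).
Hypothesis m_ge0 : forall A, (0 <= m A)%R.
Hypothesis m_add : forall A B, (forall x, A x -> B x -> False) ->
  m (fun x => A x \/ B x) = (m A + m B)%R.

Lemma measure_ext A B : (forall x, A x <-> B x) -> m A = m B.
Proof. by move=> AB; congr m; apply: funext => x; apply: propext. Qed.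

Lemma measure0 : m (fun=> False) = 0%R.
Proof.
have := m_add (A := fun=> False) (B := fun=> False) (fun _ f _ => f).
by rewrite (@measure_ext _ (fun=> False)) => [|x]; [lra | tauto].
Qed.

Lemma measure_le A B : (forall x, A x -> B x) -> (m A <= m B)%R.
Proof.
move=> AB; have := m_add (A := A) (B := fun x => B x /\ ~ A x) (fun x a b => b.2 a).
rewrite (@measure_ext _ B) => [|x]; first by have := m_ge0 (fun x => B x /\ ~ A x); lra.
by split=> [[/AB|[]] // | Bx]; case: (classic (A x)) => Ax; [left | right].
Qed.

Lemma measure_bigcup (A : nat -> G -> Prop) n :
  (forall i j x, i < n -> j < n -> A i x -> A j x -> i = j) ->
  m (fun x => exists2 j, j < n & A j x) = rsum (fun j => m (A j)) n.
Proof.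
elim: n => [|n IH] disjA /=.
  by rewrite -measure0; apply: measure_ext => x; split=> // -[].
rewrite -IH => [|i j x ilt jlt]; last by apply: disjA; apply: ltnW.
rewrite -m_add => [|x [j jlt Ajx] Anx]; last first.
  by have := disjA j n x (ltnW jlt) (ltnSn n) Ajx Anx => ejn; rewrite ejn ltnn in jlt.
apply: measure_ext => x; split=> [[j]|[[j jlt Ajx]|Anx]].
- by rewrite ltnS leq_eqVlt => /orP[/eqP -> | jlt] Ajx; [right | left; exists j].
- by exists j => //; apply: ltnW.
- by exists n.
Qed.
End FinitelyAdditiveMeasure.

Section InvariantMean.
Variables (G : Type) (mul : G -> G -> G) (one : G) (inv : G -> G).
Hypothesis HG : is_group mul one inv.
Local Notation gT := {classic G}.
Variable m : (G -> Prop) -> R.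
Hypothesis m_ge0 : forall A, (0 <= m A)%R.
Hypothesis m_setT : m (fun=> True) = 1%R.
Hypothesis m_add : forall A B, (forall x, A x -> B x -> False) ->
  m (fun x => A x \/ B x) = (m A + m B)%R.
Hypothesis m_inv : forall g A, m (fun x => A (mul (inv g) x)) = m A.

(* [phi] moves every point by one of finitely many translations [w], so its
   image is the disjoint union of the translates [w_j {g | phi g = w_j g}]. *)
Lemma measure_image_displacement (W : seq gT) (phi : gT -> gT) : injective phi ->
  (forall g, exists2 w, w \in W & phi g = mul w g) -> m (fun x => exists g, x = phi g) = 1%R.
Proof.
move=> phiI phiW; pose idx g := find (fun w : gT => phi g == mul w g) W.
have hasW g : has (fun w : gT => phi g == mul w g) W.
  by have [w wW ew] := phiW g; apply/hasP; exists w; rewrite // ew.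
have idx_lt g : idx g < size W by rewrite -has_find.
have phi_idx g : phi g = mul (nth one W (idx g)) g by apply/eqP: (nth_find (one : gT) (hasW g)).
pose T j x := idx (mul (inv (nth one W j)) x) = j.
have -> : m (fun x => exists g, x = phi g) = m (fun x => exists2 j, j < size W & T j x).
  apply: measure_ext => // x; split=> [[g ->]|[j _ Tjx]].
    by exists (idx g); rewrite // /T phi_idx (gmulKV HG).
  by exists (mul (inv (nth one W j)) x); rewrite phi_idx Tjx (gmulVK HG).
rewrite measure_bigcup // => [|i j x _ _ Tix Tjx]; last first.
  have eTx k : T k x -> x = phi (mul (inv (nth one W k)) x).
    by rewrite phi_idx => ->; rewrite (gmulVK HG).
  by rewrite -Tix -Tjx (phiI _ _ (etrans (esym (eTx _ Tix)) (eTx _ Tjx))).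
have -> : rsum (fun j => m (T j)) (size W) = rsum (fun j => m (fun g => idx g = j)) (size W).
  by elim: (size W) => //= n ->; rewrite (m_inv (nth one W n) (fun g => idx g = n)).
rewrite -measure_bigcup // => [|i j x _ _ -> //]; rewrite -m_setT; apply: measure_ext => x.
by split=> // _; exists (idx x).
Qed.

Lemma no_paradoxical_displacement (W : seq gT) (phi : gT * bool -> gT) : injective phi ->
  (forall g b, exists2 w, w \in W & phi (g, b) = mul w g) -> False.
Proof.
move=> phiI phiW; pose B b x := exists g, x = phi (g, b).
have mB b : m (B b) = 1%R.
  by apply: measure_image_displacement => [g g' /phiI[]|g]; [|apply: phiW].
have disjB x : B true x -> B false x -> False by case=> g -> [g' /phiI].
have := measure_le m_ge0 m_add (A := fun x => B true x \/ B false x) (B := fun=> True).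
move/(_ (fun _ _ => I)).
rewrite m_add // !mB m_setT; lra.
Qed.
End InvariantMean.

Section Folner.
Variables (G : Type) (mul : G -> G -> G) (one : G) (inv : G -> G).
Hypothesis HG : is_group mul one inv.
Local Notation gT := {classic G}.
Variable S : seq gT.
Hypothesis Sgen : generates mul one S.

Lemma exists_nat_enum : exists e : nat -> gT * bool, forall y, exists k, e k = y.
Proof.
exists (fun n => if @unpickle (seq nat * bool)%type n is Some (ix, b)
  then ((foldr mul one (map (nth one S) ix) : gT), b) else ((one : gT), true)).
case=> g b; have [l [lS ->]] := Sgen g; exists (pickle (map (index^~ S) l, b)).
rewrite pickleK -map_comp; congr (foldr _ _ _, _); elim: l lS => //= a l IH lS.
have aS : (a : gT) \in S by apply/(@List_InP gT)/lS; left.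
by rewrite (@nth_index gT one a S aS) IH // => x lx; apply: lS; right.
Qed.

(* If Folner sets fail at ratio [M], the finite matchings into the balls
   [iter M expand] glue, by compactness, to a paradoxical injection. *)
Theorem folner : amenable mul inv -> forall M, 0 < M -> exists F : seq gT,
  [/\ uniq F, 0 < size F &
      forall s, s \in S -> M * count (fun f => lmul mul s f \notin F) F <= size F].
Proof.
move=> [m [m_ge0 [m_setT [m_add m_inv]]]] M M_gt0; apply: NNPP => nF.
have no_folner F : uniq F -> 0 < size F ->
    exists2 s, s \in S & size F < M * count (fun f => lmul mul s f \notin F) F.
  move=> uF F0; apply: NNPP => ns; apply: nF; exists F; split=> // s sS.
  by rewrite leqNgt; apply: contra_notN ns => ltF; exists s.
have [e e_surj] := exists_nat_enum.
have [phi [phiI phiN]] := exists_valid (one : gT) e_surj (finite_matching HG M_gt0 no_folner).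
apply: (no_paradoxical_displacement HG m_ge0 m_setT m_add m_inv (W := words mul one S M) phiI).
by move=> g b; have /(mem_iter_expand1 HG) := phiN (g, b).
Qed.
End Folner.

Lemma coset_action (G : Type) (mul : G -> G -> G) (one : G) (inv : G -> G)
    (H : G -> Prop) (C : finType) (pi : G -> C) (act : G -> C -> C) :
  is_group mul one inv -> is_coset_space mul inv H pi act ->
  (forall g h c, act (mul g h) c = act g (act h c)) /\ forall c, act one c = c.
Proof.
move=> HG [pi_surj [_ pi_act]]; split=> [g h c|c]; have [x <-] := pi_surj c.
  by rewrite !pi_act (gmulA HG).
by rewrite pi_act (gmul1 HG).
Qed.

Lemma sweepout_width_folner_le (G : Type) (mul : G -> G -> G) (one : G) (inv : G -> G)
    (S F : seq {classic G}) (C : finType) (act : G -> C -> C) (M : nat) :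
  is_group mul one inv ->
  (forall g h c, act (mul g h) c = act g (act h c)) -> (forall c, act one c = c) ->
  (forall s, s \in S -> (inv s : {classic G}) \in S) ->
  0 < M -> uniq F -> 0 < size F ->
  (forall s, s \in S -> M * count (fun f => lmul mul s f \notin F) F <= size F) ->
  size F * M <= #|C| -> M * sweepout_width act S <= (2 * size S + 1) * #|C|.
Proof.
move=> HG act_mul act1 Ssym M_gt0 uF F_gt0 folF CM; set N := size F; set e := N %/ M.
have /card_gt0P[c0 _] : 0 < #|C| by rewrite (leq_trans _ CM) // muln_gt0 F_gt0 M_gt0.
have folF' s : s \in S -> count (fun f => lmul mul s f \notin F) F <= e.
  by move=> sS; rewrite leq_divRL // mulnC folF.
have := sweepout_width_folner HG c0 act_mul act1 Ssym uF F_gt0 folF'.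
have Me : M * e <= N by rewrite mulnC leq_divM.
rewrite -/N -(leq_pmul2l F_gt0) => swN.
have t1 : M * e * (size S * #|C|) <= N * (size S * #|C|) by rewrite leq_mul2r Me orbT.
have t2 : M * N * N <= #|C| * N by rewrite leq_mul2r mulnC CM orbT.
nia.
Qed.

Lemma Un_cv_nat_ratio (a b : nat -> nat) (K : nat) :
  (forall M, 0 < M -> exists I0, forall n, I0 <= n -> 0 < b n /\ M * a n <= K * b n) ->
  Un_cv (fun n => (INR (a n) / INR (b n))%R) 0%R.
Proof.
move=> hab eps eps0; have K1 : (0 < INR K.+1)%R by apply/lt_0_INR/ltP.
have [M [hM /ltP M_gt0]] := archimed_cor1 (eps / INR K.+1) (Rdiv_lt_0_compat _ _ eps0 K1).
have [I0 hI0] := hab M M_gt0; exists I0 => n /leP nI0; have [/ltP bn abn] := hI0 n nI0.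
have rb : (0 < INR (b n))%R by apply: lt_0_INR.
have rM : (0 < INR M)%R by apply/lt_0_INR/ltP.
have hx : (INR M * (INR (a n) / INR (b n)) <= INR K)%R.
  apply: (Rmult_le_reg_r (INR (b n))) => //.
  have -> : (INR M * (INR (a n) / INR (b n)) * INR (b n) = INR (M * a n))%R.
    by rewrite mult_INR; field; lra.
  by rewrite -mult_INR; apply/le_INR/leP.
have hK : (INR K.+1 < eps * INR M)%R.
  have := Rmult_lt_compat_r (INR M * INR K.+1) _ _ (Rmult_lt_0_compat _ _ rM K1) hM.
  have -> : (/ INR M * (INR M * INR K.+1) = INR K.+1)%R by field; lra.
  by have -> : (eps / INR K.+1 * (INR M * INR K.+1) = eps * INR M)%R by field; lra.
have hKK : (INR K < INR K.+1)%R by apply/lt_INR/ltP.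
have x_ge0 : (0 <= INR (a n) / INR (b n))%R.
  by apply: Rmult_le_pos; [apply: pos_INR | apply/Rlt_le/Rinv_0_lt_compat].
rewrite /Rdist Rminus_0_r Rabs_right; last exact: Rle_ge.
by apply: (Rmult_lt_reg_l (INR M)) => //; lra.
Qed.

Theorem theorem1p3
  (G : Type) (mul : G -> G -> G) (one : G) (inv : G -> G)
  (HG : is_group mul one inv)
  (S : seq G) (Ssym : symmetric_gen inv S) (Sgen : generates mul one S)
  (Hamen : amenable mul inv)
  (H : nat -> G -> Prop) (Hsub : forall i, is_subgroup mul one inv (H i))
  (C : nat -> finType) (pi : forall i, G -> C i) (act : forall i, G -> C i -> C i)
  (HC : forall i, is_coset_space mul inv (H i) (pi i) (act i))
  (Hinf : forall M : nat, exists N : nat, forall i, (N <= i)%N -> (M <= #|C i|)%N) :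
  Un_cv (fun i => (INR (sweepout_width (act i) S) / INR #|C i|)%R) 0%R.
Proof.
pose S' : seq {classic G} := S.
have Ssym' (s : {classic G}) : s \in S' -> (inv s : {classic G}) \in S'.
  by move/(@List_InP {classic G})/Ssym/(@List_InP {classic G}).
apply: (@Un_cv_nat_ratio _ _ (2 * size S + 1)) => M M_gt0.
have [F [uF F_gt0 folF]] := @folner G mul one inv HG S' Sgen Hamen M M_gt0.
have [I0 hI0] := Hinf (size F * M); exists I0 => n nI0; have CM := hI0 n nI0.
have [act_mul act1] := coset_action HG (HC n); split.
  by rewrite (leq_trans _ CM) // muln_gt0 F_gt0 M_gt0.
exact: sweepout_width_folner_le HG act_mul act1 Ssym' M_gt0 uF F_gt0 folF CM.
Qed.
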